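(* There exist a finite graded poset $P$ with $\hat0$ and two CW-labelings $\lambda_1$ and $\lambda_2$ of $P$ such that the posets $Q_{\lambda_1}(P)$ and $Q_{\lambda_2}(P)$ are not isomorphic.
   Context: C-labelings: a maximal chain is an unrefinable chain from $\hat0$ to a maximal element. A C-labeling assigns to each pair $(\mathbf m,e)$, $\mathbf m$ a maximal chain and $e$ a cover relation of $\mathbf m$, a label in a poset $\Lambda$, such that maximal chains coinciding along their bottom $d$ cover relations have equal labels there. A rooted interval $[x,y]_{\mathbf r}$ is an interval with a saturated chain $\mathbf r$ from $\hat0$ to $x$, maximal chains $\mathbf c$ of $[x,y]$ labeled as in $\mathbf r\cup\mathbf c$. Increasing = strictly increasing label word; ascent-free = no consecutive labels $a<b$. CR-labeling: each rooted interval has exactly one increasing maximal chain. Rank two switching property: for every maximal chain $\mathbf m:\hat0=m_0\lessdot\cdots\lessdot m_k$ and $i<k$ with an ascent at rank $i$ there is a unique $m_i'\neq m_i$ such that replacing $m_i$ by $m_i'$ gives a maximal chain with the same labels except that those at ranks $i,i+1$ are swapped, and $m_i'$ is the same for all maximal chains agreeing with $\mathbf m$ in $m_0,\dots,m_{i+1}$ (quadratic exchange). CW-labeling: CR-labeling with the rank two switching property such that in each rooted interval distinct ascent-free maximal chains have distinct label words. $Q_\lambda(P)$: $C(P)$ is the set of saturated chains from $\hat0$ ordered by inclusion; $\mathbf c_1\sim_\lambda\mathbf c_2$ iff they end at the same $y$ and are connected by quadratic exchanges (forwards or backwards) among maximal chains of $[\hat0,y]$; $Q_\lambda(P)$ is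 the set of classes ordered by the transitive closure of: $X\le Y$ if some $\mathbf c\in X$, $\mathbf d\in Y$ have $\mathbf c\subseteq\mathbf d$. *)

From HB Require Import structures.
From mathcomp Require Import all_boot all_order.
From Stdlib Require Import Relations.
Set Implicit Arguments. Unset Strict Implicit. Unset Printing Implicit Defensive.
Import Order.TTheory.
Local Open Scope order_scope.

(* A finite poset with 0^ is a finBPOrderType; 0^ is \bot.
   A saturated chain from x is a seq [:: c_1; ...; c_k] with
   x <. c_1 <. ... <. c_k (covers); it denotes the chain {x, c_1, ..., c_k}.
   A chain starting at 0^ is represented by the seq of its elements above 0^.
   For a maximal chain m = [:: m_1; ...; m_k] (m_0 = 0^), the label
   lam m i (0 <= i < k) is the label of the cover relation m_i <. m_(i+1),
   i.e. of the cover relation into the element nth \bot m i. *)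

Section Chains.
Variables (d : Order.disp_t) (P : finBPOrderType d).

Definition covers (x y : P) : bool :=
  (x < y) && [forall z : P, ~~ ((x < z) && (z < y))].

Definition satchain (x : P) (s : seq P) : bool := path covers x s.

Definition is_maximal (x : P) : bool := [forall y : P, ~~ (x < y)].

Definition maxchain (m : seq P) : bool :=
  satchain \bot m && is_maximal (last \bot m).

Definition graded : Prop :=
  forall m m', maxchain m -> maxchain m' -> size m = size m'.

Variables (dL : Order.disp_t) (L : porderType dL).

Definition labeling := seq P -> nat -> L.

Definition labs (lam : labeling) (m : seq P) : seq L :=
  [seq lam m i | i <- iota 0 (size m)].

Definition C_labeling (lam : labeling) : Prop :=
  forall m m' k, maxchain m -> maxchain m' -> take k m = take k m' ->
  forall i, i < k -> i < size m -> lam m i = lam m' i.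

Definition interval_chain (r : seq P) (y : P) (c : seq P) : Prop :=
  satchain \bot r /\ satchain (last \bot r) c /\ last (last \bot r) c = y.

(* w is the label word of c in the rooted interval rooted at r:
   the labels of c as in r ++ c (computed in a maximal chain extending
   r ++ c) *)
Definition rooted_word (lam : labeling) (r c : seq P) (w : seq L) : Prop :=
  exists m, maxchain m /\ prefix (r ++ c) m /\
            w = take (size c) (drop (size r) (labs lam m)).

Definition increasing (w : seq L) : bool := sorted (fun a b => a < b) w.
Definition ascent_free (w : seq L) : bool := sorted (fun a b => ~~ (a < b)) w.

Definition rooted_increasing (lam : labeling) (r c : seq P) : Prop :=
  exists w, rooted_word lam r c w /\ increasing w.

Definition CR_labeling (lam : labeling) : Prop :=
  C_labeling lam /\
  forall r y, satchain \bot r -> last \bot r <= y ->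
    exists c, (interval_chain r y c /\ rooted_increasing lam r c) /\
      forall c', interval_chain r y c' -> rooted_increasing lam r c' -> c' = c.

(* replacing the element nth \bot m p (= m_(p+1)) by y gives a maximal
   chain whose labels are those of m with the labels at positions p, p+1
   swapped *)
Definition swap_ok (lam : labeling) (m : seq P) (p : nat) (y : P) : Prop :=
  let m' := set_nth \bot m p y in
  y != nth \bot m p /\ maxchain m' /\
  lam m' p = lam m p.+1 /\ lam m' p.+1 = lam m p /\
  forall j, j < size m -> j != p -> j != p.+1 -> lam m' j = lam m j.

Definition rank_two_switching (lam : labeling) : Prop :=
  forall m p, maxchain m -> p.+1 < size m -> lam m p < lam m p.+1 ->
    exists y, swap_ok lam m p y /\
      (forall y', swap_ok lam m p y' -> y' = y) /\
      (forall n, maxchain n -> take p.+2 n = take p.+2 m -> swap_ok lam n p y).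

Definition CW_labeling (lam : labeling) : Prop :=
  CR_labeling lam /\ rank_two_switching lam /\
  forall r y c1 c2 w1 w2,
    interval_chain r y c1 -> interval_chain r y c2 ->
    rooted_word lam r c1 w1 -> rooted_word lam r c2 w2 ->
    ascent_free w1 -> ascent_free w2 -> c1 <> c2 -> w1 <> w2.

Definition inC (c : seq P) : Prop := satchain \bot c.

Definition qexchange (lam : labeling) (c c' : seq P) : Prop :=
  exists m p y, maxchain m /\ prefix c m /\ p.+1 < size c /\
    lam m p < lam m p.+1 /\ swap_ok lam m p y /\ c' = set_nth \bot c p y.

Definition qsim (lam : labeling) (c1 c2 : seq P) : Prop :=
  inC c1 /\ inC c2 /\ last \bot c1 = last \bot c2 /\
  clos_refl_sym_trans (seq P) (qexchange lam) c1 c2.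

Definition Qle0 (lam : labeling) (c d : seq P) : Prop :=
  exists c' d', qsim lam c c' /\ qsim lam d d' /\
    {subset (\bot :: c') <= (\bot :: d')}.

Definition Qle (lam : labeling) : relation (seq P) :=
  clos_trans (seq P) (Qle0 lam).

End Chains.

(* Q_{lam1}(P) and Q_{lam2}(P) are isomorphic: there is a map on chains
   inducing an order-isomorphism between the sets of classes. *)
Definition Q_isomorphic (d : Order.disp_t) (P : finBPOrderType d)
  (d1 : Order.disp_t) (L1 : porderType d1) (d2 : Order.disp_t) (L2 : porderType d2)
  (lam1 : labeling P L1) (lam2 : labeling P L2) : Prop :=
  exists f : seq P -> seq P,
    (forall c, inC c -> inC (f c)) /\
    (forall c c', inC c -> inC c' -> (qsim lam1 c c' <-> qsim lam2 (f c) (f c'))) /\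
    (forall e, inC e -> exists c, inC c /\ qsim lam2 (f c) e) /\
    (forall c c', inC c -> inC c' -> (Qle lam1 c c' <-> Qle lam2 (f c) (f c'))).

(* The poset is 0^ < a, b, c < y, z, with a and b below both y and z and c below y
   only.  Both labelings give the atoms a, b, c the labels 1, 2, 3; the maximal chains
   ay, by, cy, az, bz get the words 12, 21, 30, 12, 21 under lam1 and 10, 23, 32, 12, 21
   under lam2.  Both are CW-labelings, which is a finite check once the saturated chains
   are enumerated.  The quadratic exchanges are ay ~ by, az ~ bz for lam1 and
   by ~ cy, az ~ bz for lam2.  So in Q_lam1 the distinct classes of a and b lie strictly
   above the bottom class and below both of the distinct classes {ay, by} and {az, bz}:
   a bowtie over a strict lower bound.  In Q_lam2 no two distinct classes lying strictly
   above a common class have two distinct common upper bounds.  Having such a bowtie is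
   invariant under isomorphism of Q, hence Q_lam1 and Q_lam2 are not isomorphic. *)

From Stdlib Require Import Relations.
From HB Require Import structures.
From mathcomp Require Import all_boot all_order.
Set Implicit Arguments. Unset Strict Implicit. Unset Printing Implicit Defensive.
Local Open Scope order_scope.

Lemma filter_size1 (T : eqType) (p : pred T) (s : seq T) :
  size [seq x <- s | p x] = 1 ->
  exists2 x, x \in s & p x /\ {in s, forall y, p y -> y = x}.
Proof.
case Es: [seq x <- s | p x] => [|x []] // _.
have: x \in [seq x <- s | p x] by rewrite Es mem_head.
rewrite mem_filter => /andP[px xs]; exists x => //; split => // y ys py.
have: y \in [seq x <- s | p x] by rewrite mem_filter py ys.
by rewrite Es mem_seq1 => /eqP.
Qed.

Section QPoset.
Variables (d : Order.disp_t) (P : finBPOrderType d).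
Variables (dL : Order.disp_t) (L : porderType dL).
Implicit Types (c m : seq P).

Definition prefix_labeling (tab : seq P -> L) : labeling P L :=
  fun m i => tab (take i.+1 m).

Lemma prefix_labeling_C tab : C_labeling (prefix_labeling tab).
Proof.
move=> m m' k _ _ eq_k i lt_ik _.
by rewrite /prefix_labeling -(take_takel m lt_ik) eq_k take_takel.
Qed.

Variable lam : labeling P L.

Lemma qsim_refl c : inC c -> qsim lam c c.
Proof. by move=> cC; do 3 split=> //; apply: rst_refl. Qed.

Lemma qsim_sym c c' : qsim lam c c' -> qsim lam c' c.
Proof. by case=> cC [c'C [eq_last cc']]; do 3 split=> //; apply: rst_sym. Qed.

Lemma qsim_trans c1 c2 c3 : qsim lam c1 c2 -> qsim lam c2 c3 -> qsim lam c1 c3.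
Proof.
case=> c1C [_ [eq12 c12]] [_ [c3C [eq23 c23]]].
by do 3 split=> //; [rewrite eq12 | apply: rst_trans c23].
Qed.

Lemma qsim_last c c' : qsim lam c c' -> last \bot c = last \bot c'.
Proof. by case=> _ [_ []]. Qed.

Lemma qsim_invariant (T : Type) (h : seq P -> T) :
  (forall c c', qexchange lam c c' -> h c = h c') ->
  forall c c', qsim lam c c' -> h c = h c'.
Proof.
move=> h_inv c c' [_ [_ [_]]].
elim=> [x y /h_inv | // | x y _ -> | x y z _ -> _ ->] //.
Qed.

Lemma qsim_swap m p y : maxchain m -> (p.+1 < size m)%N -> lam m p < lam m p.+1 ->
  swap_ok lam m p y -> qsim lam m (set_nth \bot m p y).
Proof.
move=> mm lt_pm asc sw; have [_ [mm' _]] := sw.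
split; first by case/andP: mm.
split; first by case/andP: mm'.
split.
  rewrite -!nth_last size_set_nth (maxn_idPr (ltnW lt_pm)) nth_set_nth /=.
  by rewrite gtn_eqF // ltn_predRL.
apply: rst_step; exists m, p, y; split=> //; split; first exact: prefix_refl.
by rewrite ltEnat.
Qed.

Lemma Qle_inC c c' : Qle lam c c' -> inC c /\ inC c'.
Proof.
elim=> [x y [x' [y' [[xC _] [[yC _] _]]]] | x y z _ [xC _] _ [_ zC]] //.
Qed.

Lemma Qle_intro c c' c'' : inC c -> qsim lam c' c'' ->
  {subset \bot :: c <= \bot :: c''} -> Qle lam c c'.
Proof. by move=> cC c'c'' sub; apply: t_step; exists c, c''; split; first exact: qsim_refl. Qed.

Lemma Qle_qsim c1 c2 d1 d2 :
  qsim lam c1 c2 -> qsim lam d1 d2 -> Qle lam c1 d1 -> Qle lam c2 d2.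
Proof.
move=> c12 d12 c1d1; elim: c1d1 c2 d2 c12 d12 => [x y xy | x y z xy IHxy _ IHyz] x' z' xx' zz'.
  have [c' [d' [xc' [yd' sub]]]] := xy; apply: t_step; exists c', d'.
  split; first exact: qsim_trans (qsim_sym xx') xc'.
  by split; first exact: qsim_trans (qsim_sym zz') yd'.
have yy : qsim lam y y by apply/qsim_refl; case: (Qle_inC xy).
exact: t_trans (IHxy x' y xx' yy) (IHyz y z' yy zz').
Qed.

Lemma Qle_subset (T : eqType) (h : seq P -> seq T) :
  (forall c c', qexchange lam c c' -> h c = h c') ->
  (forall c c', inC c -> inC c' -> {subset \bot :: c <= \bot :: c'} -> {subset h c <= h c'}) ->
  forall c c', Qle lam c c' -> {subset h c <= h c'}.
Proof.
move=> h_inv h_mono c c'; elim=> [x y [x' [y' [xx' [yy' sub]]]] | x y z _ sub_xy _ sub_yz].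
  rewrite (qsim_invariant h_inv xx') (qsim_invariant h_inv yy').
  by apply: h_mono sub; [case: xx' => _ [] | case: yy' => _ []].
by move=> u /sub_xy /sub_yz.
Qed.

Definition Qlt c c' := Qle lam c c' /\ ~ qsim lam c c'.

Definition has_bowtie := exists b a a' x x',
  [/\ Qlt b a, Qlt b a', ~ qsim lam a a' & ~ qsim lam x x'] /\
  [/\ Qle lam a x, Qle lam a x', Qle lam a' x & Qle lam a' x'].

End QPoset.

Lemma Q_isomorphic_bowtie (d : Order.disp_t) (P : finBPOrderType d)
    (d1 : Order.disp_t) (L1 : porderType d1) (lam1 : labeling P L1)
    (d2 : Order.disp_t) (L2 : porderType d2) (lam2 : labeling P L2) :
  Q_isomorphic lam1 lam2 -> has_bowtie lam1 -> has_bowtie lam2.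
Proof.
case=> f [_ [f_qsim [_ f_Qle]]].
have f_mono c c' : Qle lam1 c c' -> Qle lam2 (f c) (f c').
  by move=> cc'; have [cC c'C] := Qle_inC cc'; apply/f_Qle.
case=> [b [a [a' [x [x' [[[ba nba] [ba' nba'] naa' nxx'] [ax ax' a'x a'x']]]]]]].
have [bC aC] := Qle_inC ba; have [a'C xC] := Qle_inC a'x; have [_ x'C] := Qle_inC ax'.
have f_nqsim c c' : inC c -> inC c' -> ~ qsim lam1 c c' -> ~ qsim lam2 (f c) (f c').
  by move=> cC c'C ncc' /(f_qsim c c' cC c'C).
exists (f b), (f a), (f a'), (f x), (f x'); split; split; try split;
  by [apply: f_mono | apply: f_nqsim].
Qed.

Section Decision.
Variables (d : Order.disp_t) (P : finBPOrderType d).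
Variable elems : seq P.
Hypothesis mem_elems : forall x, x \in elems.

Lemma forall_elems (p : pred P) : [forall x, p x] = all p elems.
Proof. by apply/forallP/allP => [p_all x _ | p_elems x]; [exact: p_all | exact: p_elems]. Qed.

Definition coverb (x y : P) : bool :=
  (x < y) && all (fun z => ~~ ((x < z) && (z < y))) elems.

Lemma satchainE x s : satchain x s = path coverb x s.
Proof. by apply: eq_path => y z; rewrite /covers forall_elems. Qed.

Fixpoint seqs_upto n : seq (seq P) :=
  if n is n'.+1 then [::] :: [seq x :: s | x <- elems, s <- seqs_upto n'] else [:: [::]].

Lemma mem_seqs_upto n s : (size s <= n)%N -> s \in seqs_upto n.
Proof.
elim: n s => [|n IHn] [|x s] //= size_s.
by rewrite inE (allpairs_f (fun x s => x :: s)) ?mem_elems ?IHn ?orbT.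
Qed.

Lemma satchain_size_le n :
  all (fun x => all (fun s => (size s == n.+1) ==> ~~ path coverb x s) (seqs_upto n.+1)) elems ->
  forall (x : P) s, satchain x s -> (size s <= n)%N.
Proof.
move=> /allP no_long x s; rewrite satchainE leqNgt; apply: contraTN => lt_ns.
have size_take : size (take n.+1 s) = n.+1 by rewrite size_takel.
have /allP/(_ (take n.+1 s)) := no_long x (mem_elems x).
rewrite mem_seqs_upto ?size_take // eqxx => /(_ isT) short_not_path.
by rewrite -(cat_take_drop n.+1 s) cat_path (negbTE short_not_path).
Qed.

Variable chains : seq (seq P).
Hypothesis chainsP : forall (x : P) s, satchain x s -> s \in chains.

Definition satchains_from x := [seq s <- chains | path coverb x s].

Lemma mem_satchains_from x s : (s \in satchains_from x) = satchain x s.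
Proof.
rewrite mem_filter -satchainE.
by apply/andP/idP => [[] // | s_sat]; rewrite s_sat (chainsP s_sat).
Qed.

Definition maxchains :=
  [seq m <- satchains_from \bot | all (fun y => ~~ (last \bot m < y)) elems].

Lemma mem_maxchains m : (m \in maxchains) = maxchain m.
Proof. by rewrite mem_filter mem_satchains_from andbC /maxchain /is_maximal forall_elems. Qed.

Lemma graded_check n : all (fun m => size m == n) maxchains -> graded P.
Proof.
move=> /allP sizes m m' mm mm'.
by rewrite (eqP (sizes m _)) ?(eqP (sizes m' _)) ?mem_maxchains.
Qed.

Definition subset_monotone_check (T : eqType) (h : seq P -> seq T) :=
  all (fun c => all (fun c' => all (mem (\bot :: c')) (\bot :: c) ==> all (mem (h c')) (h c))
    (satchains_from \bot)) (satchains_from \bot).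

Lemma subset_monotone (T : eqType) (h : seq P -> seq T) : subset_monotone_check h ->
  forall c c', inC c -> inC c' -> {subset \bot :: c <= \bot :: c'} -> {subset h c <= h c'}.
Proof.
move=> /allP mono c c' cC c'C sub; apply/allP.
have := mono c; rewrite mem_satchains_from => /(_ cC)/allP/(_ c').
by rewrite mem_satchains_from => /(_ c'C)/implyP; apply; apply/allP.
Qed.

Variables (dL : Order.disp_t) (L : porderType dL) (lam : labeling P L).

Definition word (r c m : seq P) : seq L := take (size c) (drop (size r) (labs lam m)).

Definition rooted_increasingb r c :=
  has (fun m => prefix (r ++ c) m && increasing (word r c m)) maxchains.

Lemma rooted_increasingP r c : rooted_increasing lam r c <-> rooted_increasingb r c.
Proof.
split=> [[_ [[m [mm [pre ->]]] inc]] | /hasP[m]].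
  by apply/hasP; exists m; rewrite ?mem_maxchains ?pre.
by rewrite mem_maxchains => mm /andP[pre inc]; exists (word r c m); split=> //; exists m.
Qed.

Definition CR_check :=
  all (fun r => all (fun y => (last \bot r <= y) ==>
    (size [seq c <- satchains_from (last \bot r) |
           (last (last \bot r) c == y) && rooted_increasingb r c] == 1))
    elems) (satchains_from \bot).

Lemma CR_labeling_check : C_labeling lam -> CR_check -> CR_labeling lam.
Proof.
move=> C_lam /allP CR; split=> // r y r_sat le_ry.
have := CR r; rewrite mem_satchains_from => /(_ r_sat)/allP/(_ y (mem_elems y)).
rewrite le_ry => /eqP/filter_size1[c]; rewrite mem_satchains_from => c_sat.
move=> [/andP[/eqP c_y c_inc] c_uniq]; exists c; split.
  by split; [split | exact/rooted_increasingP].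
move=> c' [_ [c'_sat c'_y]] /rooted_increasingP c'_inc.
by apply: c_uniq; rewrite ?mem_satchains_from ?c'_y ?eqxx.
Qed.

Definition swapb m p y := let m' := set_nth \bot m p y in
  [&& y != nth \bot m p, m' \in maxchains, lam m' p == lam m p.+1, lam m' p.+1 == lam m p &
      all (fun j => (j != p) ==> (j != p.+1) ==> (lam m' j == lam m j)) (iota 0 (size m))].

Lemma swap_okP m p y : reflect (swap_ok lam m p y) (swapb m p y).
Proof.
rewrite /swapb mem_maxchains.
apply: (iffP and5P) => [[ne mm' /eqP sw1 /eqP sw2 /allP others] | [ne [mm' [sw1 [sw2 others]]]]].
  do 4 split=> //; move=> j; rewrite ltEnat /= => lt_jm j_p j_p1; apply/eqP.
  by apply: (implyP (implyP (others j _) j_p) j_p1); rewrite mem_iota add0n lt_jm.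
split=> //; rewrite ?sw1 ?sw2 //; apply/allP => j; rewrite mem_iota add0n /= => lt_jm.
by apply/implyP => j_p; apply/implyP => j_p1; rewrite others // ltEnat.
Qed.

Definition R2_check :=
  all (fun m => all (fun p => (lam m p < lam m p.+1) ==>
      (size [seq y <- elems | swapb m p y] == 1) &&
      all (fun y => swapb m p y ==>
        all (fun n => (take p.+2 n == take p.+2 m) ==> swapb n p y) maxchains) elems)
    (iota 0 (size m).-1)) maxchains.

Lemma rank_two_switching_check : R2_check -> rank_two_switching lam.
Proof.
move=> /allP R2 m p mm; rewrite ltEnat /= => lt_pm asc.
have := R2 m; rewrite mem_maxchains => /(_ mm)/allP/(_ p).
rewrite mem_iota add0n ltn_predRL lt_pm asc => /(_ isT).
case/andP=> /eqP/filter_size1[y _ [sw y_uniq]] /allP/(_ y (mem_elems y)).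
rewrite sw => /allP propagate; exists y; split; first exact/swap_okP.
split=> [y' /swap_okP sw' | n nm eq_take]; first exact: y_uniq.
by apply/swap_okP; move: (propagate n); rewrite mem_maxchains nm eq_take eqxx => /(_ isT).
Qed.

Definition CW_check :=
  all (fun r => let cs := satchains_from (last \bot r) in
    all (fun c1 => all (fun c2 =>
      (c1 != c2) && (last (last \bot r) c1 == last (last \bot r) c2) ==>
      all (fun m1 => all (fun m2 =>
        [&& prefix (r ++ c1) m1, prefix (r ++ c2) m2,
            ascent_free (word r c1 m1) & ascent_free (word r c2 m2)] ==>
        (word r c1 m1 != word r c2 m2)) maxchains) maxchains) cs) cs)
    (satchains_from \bot).

Lemma CW_labeling_check :
  C_labeling lam -> CR_check -> R2_check -> CW_check -> CW_labeling lam.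
Proof.
move=> C_lam CR R2 /allP CW; split; first exact: CR_labeling_check.
split; first exact: rank_two_switching_check.
move=> r y c1 c2 w1 w2 [r_sat [c1_sat c1_y]] [_ [c2_sat c2_y]].
move=> [m1 [mm1 [pre1 ->]]] [m2 [mm2 [pre2 ->]]] af1 af2 /eqP ne12.
have := CW r; rewrite mem_satchains_from => /(_ r_sat)/allP/(_ c1 _)/allP/(_ c2 _).
rewrite !mem_satchains_from ne12 c1_y c2_y eqxx => /(_ c1_sat c2_sat).
move=> /allP/(_ m1 _)/allP/(_ m2 _); rewrite !mem_maxchains pre1 pre2 af1 af2.
by move=> /(_ mm1 mm2)/eqP.
Qed.

Definition qexchange_invariant_check (T : eqType) (h : seq P -> T) :=
  all (fun m => all (fun k => all (fun p => (lam m p < lam m p.+1) ==>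
      all (fun y => swapb m p y ==> (h (take k m) == h (set_nth \bot (take k m) p y))) elems)
    (iota 0 k.-1)) (iota 0 (size m).+1)) maxchains.

Lemma qexchange_invariant (T : eqType) (h : seq P -> T) : qexchange_invariant_check h ->
  forall c c', qexchange lam c c' -> h c = h c'.
Proof.
move=> /allP inv c c' [m [p [y [mm [pre [lt_pc [asc [/swap_okP sw ->]]]]]]]].
move: lt_pc; rewrite ltEnat /= => lt_pc.
have c_take : take (size c) m = c by apply/eqP; rewrite -prefixE.
have := inv m; rewrite mem_maxchains => /(_ mm)/allP/(_ (size c)).
rewrite mem_iota ltnS size_prefix // => /(_ isT)/allP/(_ p).
rewrite mem_iota add0n ltn_predRL lt_pc asc => /(_ isT)/allP/(_ y (mem_elems y)).
by rewrite sw c_take => /eqP.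
Qed.

Definition bowtie_free_check (rep : seq P -> seq P) (le : rel (seq P)) :=
  let reps := undup [seq rep c | c <- satchains_from \bot] in
  all (fun b => all (fun a => le b a && (b != a) ==>
    all (fun a' => [&& le b a', b != a' & a != a'] ==>
      all (fun x => le a x && le a' x ==>
        all (fun x' => ~~ [&& le a x', le a' x' & x != x']) reps) reps) reps) reps) reps.

(* A bowtie stays a bowtie when each of its five chains is replaced by the
   representative of its class, so it suffices to search among representatives. *)
Lemma bowtie_free_check_sound (rep : seq P -> seq P) (le : rel (seq P)) :
  (forall c, inC c -> qsim lam c (rep c)) ->
  (forall c c', Qle lam c c' -> le c c') ->
  bowtie_free_check rep le -> ~ has_bowtie lam.
Proof.
move=> c_rep le_Qle /allP bf [b [a [a' [x [x' [[[ba nba] [ba' nba'] naa' nxx'] [ax ax' a'x a'x']]]]]]].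
have [bC aC] := Qle_inC ba; have [a'C xC] := Qle_inC a'x; have [_ x'C] := Qle_inC ax'.
have in_reps c : inC c -> rep c \in undup [seq rep c | c <- satchains_from \bot].
  by move=> cC; rewrite mem_undup map_f ?mem_satchains_from.
have le_rep c c' : Qle lam c c' -> le (rep c) (rep c').
  move=> cc'; have [cC c'C] := Qle_inC cc'.
  exact/le_Qle/(Qle_qsim (c_rep c cC) (c_rep c' c'C)).
have ne_rep c c' : inC c -> inC c' -> ~ qsim lam c c' -> rep c != rep c'.
  move=> cC c'C ncc'; apply/eqP => eq_rep; apply: ncc'.
  by apply: qsim_trans (c_rep c cC) _; rewrite eq_rep; apply/qsim_sym/c_rep.
move: (bf _ (in_reps b bC)) => /allP/(_ _ (in_reps a aC)).
rewrite (le_rep _ _ ba) ne_rep // => /allP/(_ _ (in_reps a' a'C)).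
rewrite (le_rep _ _ ba') !ne_rep // => /allP/(_ _ (in_reps x xC)).
rewrite (le_rep _ _ ax) (le_rep _ _ a'x) => /allP/(_ _ (in_reps x' x'C)).
by rewrite (le_rep _ _ ax') (le_rep _ _ a'x') ne_rep.
Qed.

End Decision.

Inductive P6 := pO | pA | pB | pC | pY | pZ.

Definition nat_of_P6 (x : P6) : nat :=
  match x with pO => 0 | pA => 1 | pB => 2 | pC => 3 | pY => 4 | pZ => 5 end.
Definition P6_of_nat (n : nat) : option P6 :=
  match n with
  | 0 => Some pO | 1 => Some pA | 2 => Some pB | 3 => Some pC | 4 => Some pY | 5 => Some pZ
  | _ => None
  end.
Lemma nat_of_P6K : pcancel nat_of_P6 P6_of_nat. Proof. by case. Qed.
HB.instance Definition _ := Countable.copy P6 (pcan_type nat_of_P6K).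

Definition elems6 := [:: pO; pA; pB; pC; pY; pZ].
Lemma mem_elems6 x : x \in elems6. Proof. by case: x. Qed.
HB.instance Definition _ := isFinite.Build P6 (Finite.uniq_enumP (erefl : uniq elems6) mem_elems6).

Definition le6 (x y : P6) : bool :=
  match x, y with
  | pO, _ | pA, (pA | pY | pZ) | pB, (pB | pY | pZ) | pC, (pC | pY) | pY, pY | pZ, pZ => true
  | _, _ => false
  end.
Lemma le6_refl : reflexive le6. Proof. by case. Qed.
Lemma le6_anti : antisymmetric le6. Proof. by case; case => // /andP[]. Qed.
Lemma le6_trans : transitive le6. Proof. by case; case; case. Qed.
Fact P6_display : Order.disp_t. Proof. exact: Order.Disp tt tt. Qed.
HB.instance Definition _ := Order.Le_isPOrder.Build P6_display P6 le6_refl le6_anti le6_trans.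
HB.instance Definition _ := Order.hasBottom.Build P6_display P6 (fun x => erefl : le6 pO x).

Definition chains6 := seqs_upto elems6 2.

Lemma chains6P (x : P6) s : satchain x s -> s \in chains6.
Proof.
move=> sat; apply: (mem_seqs_upto mem_elems6).
by apply: (satchain_size_le (n := 2) mem_elems6 _ sat); vm_compute.
Qed.

Lemma graded6 : graded P6.
Proof. by apply: (graded_check mem_elems6 chains6P (n := 2)); vm_compute. Qed.

Definition tab1 (s : seq P6) : nat :=
  match s with
  | [:: pA] => 1 | [:: pB] => 2 | [:: pC] => 3
  | [:: pA; pZ] | [:: pA; pY] => 2
  | [:: pB; pZ] | [:: pB; pY] => 1
  | _ => 0
  end.

Definition tab2 (s : seq P6) : nat :=
  match s with
  | [:: pA] => 1 | [:: pB] => 2 | [:: pC] => 3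
  | [:: pA; pZ] => 2 | [:: pB; pZ] => 1
  | [:: pA; pY] => 0 | [:: pB; pY] => 3 | [:: pC; pY] => 2
  | _ => 0
  end.

Definition lam1 : labeling P6 nat := prefix_labeling tab1.
Definition lam2 : labeling P6 nat := prefix_labeling tab2.

Lemma CW_lam1 : CW_labeling lam1.
Proof.
by apply: (CW_labeling_check mem_elems6 chains6P (prefix_labeling_C _)); vm_compute.
Qed.

Lemma CW_lam2 : CW_labeling lam2.
Proof.
by apply: (CW_labeling_check mem_elems6 chains6P (prefix_labeling_C _)); vm_compute.
Qed.

Lemma qsim6_swap (lam : labeling P6 nat) m p y :
  m \in maxchains elems6 chains6 -> (p.+1 < size m)%N -> lam m p < lam m p.+1 ->
  swapb elems6 chains6 lam m p y -> qsim lam m (set_nth \bot m p y).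
Proof.
rewrite (mem_maxchains mem_elems6 chains6P) => mm lt_pm asc /(swap_okP mem_elems6 chains6P) sw.
exact: qsim_swap.
Qed.

Lemma bowtie_lam1 : has_bowtie lam1.
Proof.
have qsim_z : qsim lam1 [:: pA; pZ] [:: pB; pZ].
  by apply: (qsim6_swap (m := [:: pA; pZ]) (p := 0) (y := pB)); vm_compute.
have qsim_y : qsim lam1 [:: pA; pY] [:: pB; pY].
  by apply: (qsim6_swap (m := [:: pA; pY]) (p := 0) (y := pB)); vm_compute.
have inC6 c : path (coverb elems6) \bot c -> inC c by rewrite /inC (satchainE mem_elems6).
have qsim6_refl c : path (coverb elems6) \bot c -> qsim lam1 c c by move/inC6/qsim_refl.
have Qle6 c c' c'' : path (coverb elems6) \bot c -> qsim lam1 c' c'' ->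
    all (mem (\bot :: c'')) (\bot :: c) -> Qle lam1 c c'.
  by move=> /inC6 cC c'c'' /allP; apply: Qle_intro.
exists [::], [:: pA], [:: pB], [:: pA; pZ], [:: pA; pY].
split; split; try split; try by move/qsim_last.
- by apply: Qle6 (qsim6_refl _ _) _; vm_compute.
- by apply: Qle6 (qsim6_refl _ _) _; vm_compute.
- by apply: Qle6 (qsim6_refl _ _) _; vm_compute.
- by apply: Qle6 (qsim6_refl _ _) _; vm_compute.
- by apply: Qle6 qsim_z _; vm_compute.
- by apply: Qle6 qsim_y _; vm_compute.
Qed.

Definition rep2 (c : seq P6) : seq P6 :=
  if c == [:: pB; pZ] then [:: pA; pZ] else if c == [:: pC; pY] then [:: pB; pY] else c.

Definition class2 (c : seq P6) : seq P6 :=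
  \bot :: flatten [seq e <- chains6 | rep2 e == rep2 c].

Lemma rep2_qexchange c c' : qexchange lam2 c c' -> rep2 c = rep2 c'.
Proof. by apply: (qexchange_invariant mem_elems6 chains6P); vm_compute. Qed.

Lemma qsim_rep2 c : inC c -> qsim lam2 c (rep2 c).
Proof.
rewrite /rep2; case: eqP => [-> _ | _]; last case: eqP => [-> _ | _ /qsim_refl //].
  by apply/qsim_sym/(qsim6_swap (m := [:: pA; pZ]) (p := 0)); vm_compute.
by apply/qsim_sym/(qsim6_swap (m := [:: pB; pY]) (p := 0)); vm_compute.
Qed.

Lemma Qle_class2 c c' : Qle lam2 c c' -> {subset class2 c <= class2 c'}.
Proof.
apply: Qle_subset => [e e' /rep2_qexchange | ]; first by rewrite /class2 => ->.
by apply: (subset_monotone mem_elems6 chains6P); vm_compute.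
Qed.

Lemma no_bowtie_lam2 : ~ has_bowtie lam2.
Proof.
apply: (bowtie_free_check_sound mem_elems6 chains6P qsim_rep2
          (le := fun c c' => all (mem (class2 c')) (class2 c))).
  by move=> c c' /Qle_class2 /allP.
by vm_compute.
Qed.

Theorem theorem5p22 :
  exists (d : Order.disp_t) (P : finBPOrderType d),
    graded P /\
    exists (d1 : Order.disp_t) (L1 : porderType d1) (lam1 : labeling P L1)
           (d2 : Order.disp_t) (L2 : porderType d2) (lam2 : labeling P L2),
      CW_labeling lam1 /\ CW_labeling lam2 /\ ~ Q_isomorphic lam1 lam2.
Proof.
exists _, P6; split; first exact: graded6.
exists _, nat, lam1, _, nat, lam2; split; first exact: CW_lam1.
split; first exact: CW_lam2.
by move/Q_isomorphic_bowtie/(_ bowtie_lam1); apply: no_bowtie_lam2.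
Qed.
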